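(* Let $d\ge2$ and run the $d$-particle PushTASEP from a fixed initial configuration $\xi^{(1)}_0<\dots<\xi^{(d)}_0$. Let $W_T=(W^1_T,\dots,W^{d-1}_T)$ with $W^i_T=\xi^{(i+1)}_T-\xi^{(i)}_T-1$ be its gap process, $B_d=\{x\in\mathbb Z^{d-1}_{\ge0}: x_i=0\text{ for some }i\}$, and $N^{(d)}_T=\int_0^T\mathbf 1(W_s\in B_d)\,ds$. Then $\mathbb E[N^{(d)}_T]=\Theta(\sqrt T)$ as $T\to\infty$, and for each $1\le i\le d$, $\mathbb E[\xi^{(i)}_T-\xi^{(i)}_0]=T+O(\sqrt T)$.
   Context: PushTASEP: a continuous-time process of $d$ particles at distinct sites of $\mathbb Z$, each particle carrying an independent rate-$1$ exponential clock. When a particle's clock rings it jumps one site to the right; if that site is occupied, the occupying particle is pushed one site to the right, which in turn pushes any particle to its immediate right, and so on. $\xi^{(1)}_T<\dots<\xi^{(d)}_T$ denote the particle positions at time $T$. $\Theta(\sqrt T)$ means bounded above and below by positive constant multiples of $\sqrt T$ for large $T$. *)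

From Stdlib Require Import Reals Lra Lia ZArith Arith List.
From Coquelicot Require Import Coquelicot.
Import ListNotations.
Open Scope R_scope.

(* A configuration of the d-particle PushTASEP: particle k (0 <= k < d,
   i.e. the paper's xi^{(k+1)}) sits at site [x k] of Z.  Entries with
   index >= d are irrelevant and never modified. *)
Definition config := nat -> Z.

(* Effect of the clock of particle i ringing (for a strictly increasing
   configuration): particle i jumps one step right and pushes the maximal
   contiguous block of particles immediately to its right.  Particle j >= i
   belongs to that block iff x j - x i = j - i (positions are strictly
   increasing), and then it moves by one; all others stay put. *)
Definition jump (d : nat) (x : config) (i : nat) : config :=
  fun j => if ((i <=? j)%nat && (j <? d)%nat &&
               Z.eqb (x j - x i)%Z (Z.of_nat (j - i)))%bool
           then (x j + 1)%Z else x j.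

(* Expectation of f after n clock rings of the embedded jump chain, where
   each ring belongs to a uniformly chosen particle (d independent rate-1
   clocks = one rate-d clock with a uniform label). *)
Fixpoint expect_steps (d n : nat) (f : config -> R) (x : config) : R :=
  match n with
  | O => f x
  | S m => / INR d *
           fold_right Rplus 0
             (map (fun i => expect_steps d m f (jump d x i)) (seq 0 d))
  end.

(* Expectation E[f(xi_T)] of the continuous-time PushTASEP started from x0:
   the number of rings in [0,T] is Poisson(d T) (uniformization). *)
Definition expect_at (d : nat) (T : R) (f : config -> R) (x0 : config) : R :=
  Series (fun n => exp (- (INR d * T)) * (INR d * T) ^ n / INR (fact n)
                   * expect_steps d n f x0).

(* Gap W^{i+1} = xi^{(i+2)} - xi^{(i+1)} - 1, for 0 <= i < d-1. *)
Definition gap (x : config) (i : nat) : Z := (x (S i) - x i - 1)%Z.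

Definition indB (d : nat) (x : config) : R :=
  if existsb (fun i => Z.eqb (gap x i) 0%Z) (seq 0 (d - 1)) then 1 else 0.

(* E[N^{(d)}_T] = E[int_0^T 1(W_s in B_d) ds] = int_0^T P(W_s in B_d) ds
   (Tonelli). *)
Definition expected_occupation (d : nat) (T : R) (x0 : config) : R :=
  RInt (fun s => expect_at d s (indB d) x0) 0 T.

Definition expected_displacement (d : nat) (T : R) (x0 : config) (i : nat) : R :=
  expect_at d T (fun x => IZR (x i - x0 i)%Z) x0.

(** Uniformization makes [t |-> E[f(xi_t)]] the Poisson([d t]) mixture of the
    expectations after [n] clock rings, so it is differentiable with derivative
    [E[(L f)(xi_t)]], where [L f y = sum_i (f (jump y i) - f y)] is the generator;
    integrating, [E[f(xi_T)] - f(xi_0) = int_0^T E[(L f)(xi_s)] ds].  The leftmost particle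
    is never pushed, so [L xi^(1) = 1] and [E xi^(1)_T = xi^(1)_0 + T].  Every
    gap satisfies [L (W^i)^2 <= 2], so [E (W^i)_T <= sqrt (E (W^i)^2_T) = O(sqrt T)];
    as [xi^(i) - xi^(1)] is a sum of gaps, this gives the displacements.  Since
    [L (sum_k xi^(k)) >= d + 1_B], the occupation time is at most the growth of
    [sum_k (xi^(k) - xi^(1))], which is [O(sqrt T)].  Conversely
    [L W^1 = 1(W^1 = 0) <= 1_B], so [E N_T >= E W^1_T - W^1_0]; and
    [L (W^1)^2 >= 1], [L (W^1)^4 <= 12 (W^1)^2 + 2] give [E (W^1)^2_T >= T] and
    [E (W^1)^4_T = O(T^2)], whence [E W^1_T >= c sqrt T] by the moment inequality
    [W >= 3 W^2 / (2 a) - W^4 / (2 a^3)] for [W >= 0]. *)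

From Stdlib Require Import Reals ZArith Lra Lia List.
From Coquelicot Require Import Coquelicot.
Open Scope R_scope.

Lemma le_of_is_derive_nonpos (F dF : R -> R) (a b : R) :
  a <= b -> (forall t, a <= t <= b -> is_derive F t (dF t)) ->
  (forall t, a <= t <= b -> dF t <= 0) -> F b <= F a.
Proof.
  intros Hab HF Hneg.
  destruct (MVT_gen F a b dF) as [c [Hc Hmvt]].
  - intros t Ht. rewrite Rmin_left, Rmax_right in Ht by lra. apply HF; lra.
  - intros t Ht. rewrite Rmin_left, Rmax_right in Ht by lra.
    apply continuity_pt_filterlim, (ex_derive_continuous F).
    exists (dF t). now apply HF.
  - rewrite Rmin_left, Rmax_right in Hc by lra.
    pose proof (Hneg c Hc). nra.
Qed.

Definition exp_bounded (a : nat -> R) : Prop :=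
  exists M K, 0 <= K /\ forall n, Rabs (a n) <= M * K ^ n.

Definition poisson_mean (l : R) (a : nat -> R) : R :=
  Series (fun n => exp (- l) * l ^ n / INR (fact n) * a n).

Definition egf (a : nat -> R) (n : nat) : R := a n / INR (fact n).

Lemma INR_fact_pos n : 0 < INR (fact n).
Proof. apply lt_0_INR, lt_O_fact. Qed.

Lemma poisson_mean_egf a l : poisson_mean l a = exp (- l) * PSeries (egf a) l.
Proof.
  unfold poisson_mean, PSeries. rewrite <- Series_scal_l.
  apply Series_ext. intros n. unfold egf, Rdiv. ring.
Qed.

Section PoissonMean.

Variable a : nat -> R.
Hypothesis a_bounded : exp_bounded a.

Lemma CV_radius_egf x : Rbar_lt (Rabs x) (CV_radius (egf a)).
Proof.
  destruct a_bounded as [M [K [HK Ha]]].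
  assert (Hdisk : forall r, CV_disk (egf a) r).
  { intros r. unfold CV_disk.
    apply (@ex_series_le R_AbsRing R_CompleteNormedModule _
             (fun n => M * ((K * Rabs r) ^ n / INR (fact n)))).
    - intros n. unfold norm; simpl. unfold abs; simpl.
      rewrite Rabs_Rabsolu, Rabs_mult. unfold egf, Rdiv.
      rewrite Rabs_mult, (Rabs_right (/ INR (fact n)))
        by (apply Rle_ge, Rlt_le, Rinv_0_lt_compat, INR_fact_pos).
      rewrite <- RPow_abs, Rpow_mult_distr.
      assert (0 <= / INR (fact n) * Rabs r ^ n).
      { apply Rmult_le_pos; [apply Rlt_le, Rinv_0_lt_compat, INR_fact_pos|].
        apply pow_le, Rabs_pos. }
      replace (M * (K ^ n * Rabs r ^ n * / INR (fact n)))
        with (M * K ^ n * (/ INR (fact n) * Rabs r ^ n)) by ring.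
      rewrite Rmult_assoc. apply Rmult_le_compat_r; auto.
    - apply (ex_series_scal_l M (fun n => (K * Rabs r) ^ n / INR (fact n))).
      eapply ex_series_ext; [|exists (exp (K * Rabs r)); apply is_exp_Reals].
      intros n. rewrite pow_n_pow. reflexivity. }
  pose proof (proj1 (Lub_Rbar_correct (CV_disk (egf a))) (Rabs x + 1) (Hdisk _)).
  unfold CV_radius.
  destruct (Lub_Rbar (CV_disk (egf a))); simpl in *; lra.
Qed.

Lemma ex_series_poisson l :
  ex_series (fun n => exp (- l) * l ^ n / INR (fact n) * a n).
Proof.
  pose proof (CV_radius_inside _ _ (CV_radius_egf l)) as H.
  apply (ex_series_scal_l (exp (- l))) in H.
  eapply ex_series_ext; [|exact H]. intros n.
  unfold scal; simpl. unfold mult; simpl. rewrite pow_n_pow. unfold egf, Rdiv. ring.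
Qed.

Lemma is_derive_poisson_mean l :
  is_derive (fun l => poisson_mean l a) l (poisson_mean l (fun n => a (S n) - a n)).
Proof.
  assert (Hegf : PSeries (egf (fun n => a (S n) - a n)) l
                 = PSeries (PS_derive (egf a)) l - PSeries (egf a) l).
  { rewrite <- PSeries_minus.
    - apply PSeries_ext. intros n.
      unfold PS_minus, PS_derive, egf. rewrite fact_simpl, mult_INR.
      unfold minus, plus, opp; simpl.
      pose proof (INR_fact_pos n). assert (HSn : INR (S n) <> 0) by (apply not_0_INR; lia).
      field. split; [lra | exact HSn].
    - apply ex_pseries_derive, CV_radius_egf.
    - apply CV_radius_inside, CV_radius_egf. }
  eapply is_derive_ext. { intros u. symmetry. apply poisson_mean_egf. }
  rewrite poisson_mean_egf, Hegf.
  replace (exp (- l) * (PSeries (PS_derive (egf a)) l - PSeries (egf a) l))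
    with (- exp (- l) * PSeries (egf a) l + exp (- l) * PSeries (PS_derive (egf a)) l)
    by ring.
  apply (is_derive_mult (fun l => exp (- l)) (PSeries (egf a))).
  - auto_derive; auto. ring.
  - apply is_derive_PSeries, CV_radius_egf.
  - intros; apply Rmult_comm.
Qed.

End PoissonMean.

Lemma poisson_mean_0 a : poisson_mean 0 a = a 0%nat.
Proof.
  rewrite poisson_mean_egf, Ropp_0, exp_0, PSeries_0. unfold egf. simpl. field.
Qed.

Lemma poisson_mean_ext l a b : (forall n, a n = b n) -> poisson_mean l a = poisson_mean l b.
Proof. intros H. unfold poisson_mean. apply Series_ext. intros n. now rewrite H. Qed.

Lemma poisson_mean_scal l c a :
  poisson_mean l (fun n => c * a n) = c * poisson_mean l a.
Proof.
  unfold poisson_mean. rewrite <- Series_scal_l. apply Series_ext. intros n. ring.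
Qed.

Lemma poisson_mean_plus l a b : exp_bounded a -> exp_bounded b ->
  poisson_mean l (fun n => a n + b n) = poisson_mean l a + poisson_mean l b.
Proof.
  intros Ha Hb. unfold poisson_mean.
  rewrite <- Series_plus by (apply ex_series_poisson; assumption).
  apply Series_ext. intros n. ring.
Qed.

Lemma poisson_mean_const l c : poisson_mean l (fun _ => c) = c.
Proof.
  rewrite poisson_mean_egf.
  rewrite (PSeries_ext _ (PS_scal c (fun n => / INR (fact n))))
    by (intros n; unfold egf, PS_scal, scal; simpl; unfold mult; simpl; unfold Rdiv; ring).
  rewrite PSeries_scal.
  rewrite (is_pseries_unique _ _ _ (is_exp_Reals l)).
  unfold scal; simpl; unfold mult; simpl.
  rewrite Rmult_comm, Rmult_assoc, <- exp_plus, Rplus_opp_r, exp_0. ring.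
Qed.

Lemma poisson_mean_le l a b : exp_bounded a -> exp_bounded b -> 0 <= l ->
  (forall n, a n <= b n) -> poisson_mean l a <= poisson_mean l b.
Proof.
  intros Ha Hb Hl Hab.
  apply Rminus_le_0. unfold poisson_mean.
  rewrite <- Series_minus by (apply ex_series_poisson; assumption).
  replace 0 with (Series (fun _ : nat => 0 * 0)) by (rewrite Series_scal_l; ring).
  apply Series_le.
  - intros n. split; [lra|].
    pose proof (INR_fact_pos n). pose proof (Hab n).
    assert (0 <= exp (- l) * l ^ n / INR (fact n)).
    { apply Rmult_le_pos; [apply Rmult_le_pos|].
      - apply Rlt_le, exp_pos.
      - now apply pow_le.
      - now apply Rlt_le, Rinv_0_lt_compat. }
    nra.
  - eapply ex_series_ext;
      [|apply ex_series_minus;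
          [apply (ex_series_poisson b Hb l) | apply (ex_series_poisson a Ha l)]].
    intros n. reflexivity.
Qed.

Definition rsum (n : nat) (g : nat -> R) : R := fold_right Rplus 0 (map g (seq 0 n)).

Lemma rsum_0 g : rsum 0 g = 0.
Proof. reflexivity. Qed.

Lemma rsum_S n g : rsum (S n) g = rsum n g + g n.
Proof.
  unfold rsum. rewrite seq_S, map_app, fold_right_app. simpl.
  generalize (g n). induction (map g (seq 0 n)) as [|x l IH]; intros c; simpl.
  - ring.
  - rewrite IH. ring.
Qed.

Lemma rsum_ext n g h : (forall i, (i < n)%nat -> g i = h i) -> rsum n g = rsum n h.
Proof.
  induction n as [|n IH]; intros H; [reflexivity|].
  rewrite !rsum_S, IH by (intros; apply H; lia). now rewrite H by lia.
Qed.

Lemma rsum_le n g h : (forall i, (i < n)%nat -> g i <= h i) -> rsum n g <= rsum n h.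
Proof.
  induction n as [|n IH]; intros H; [rewrite !rsum_0; lra|].
  rewrite !rsum_S. pose proof (H n ltac:(lia)).
  pose proof (IH (fun i Hi => H i ltac:(lia))). lra.
Qed.

Lemma rsum_plus n g h : rsum n (fun i => g i + h i) = rsum n g + rsum n h.
Proof. induction n as [|n IH]; [rewrite !rsum_0; ring|]. rewrite !rsum_S, IH. ring. Qed.

Lemma rsum_scal n c g : rsum n (fun i => c * g i) = c * rsum n g.
Proof. induction n as [|n IH]; [rewrite !rsum_0; ring|]. rewrite !rsum_S, IH. ring. Qed.

Lemma rsum_const n c : rsum n (fun _ => c) = INR n * c.
Proof. induction n as [|n IH]; [rewrite rsum_0; simpl; ring|]. rewrite rsum_S, IH, S_INR. ring. Qed.

Lemma rsum_abs_le n g B : (forall i, (i < n)%nat -> Rabs (g i) <= B) ->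
  Rabs (rsum n g) <= INR n * B.
Proof.
  induction n as [|n IH]; intros H; [rewrite rsum_0, Rabs_R0; simpl; lra|].
  rewrite rsum_S, S_INR. eapply Rle_trans; [apply Rabs_triang|].
  pose proof (H n ltac:(lia)). pose proof (IH (fun i Hi => H i ltac:(lia))). lra.
Qed.

Lemma rsum_prefix_le k n g : (k <= n)%nat ->
  (forall i, (k <= i < n)%nat -> 0 <= g i) -> rsum k g <= rsum n g.
Proof.
  induction n as [|n IH]; intros Hk H.
  - replace k with 0%nat by lia. lra.
  - destruct (Nat.eq_dec k (S n)) as [->|Hne]; [lra|].
    rewrite rsum_S. pose proof (H n ltac:(lia)).
    pose proof (IH ltac:(lia) (fun i Hi => H i ltac:(lia))). lra.
Qed.

Lemma rsum_prefix_eq k n g : (k <= n)%nat ->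
  (forall i, (k <= i < n)%nat -> g i = 0) -> rsum n g = rsum k g.
Proof.
  induction n as [|n IH]; intros Hk H.
  - now replace k with 0%nat by lia.
  - destruct (Nat.eq_dec k (S n)) as [->|Hne]; [reflexivity|].
    rewrite rsum_S, H by lia.
    rewrite IH by (try intros; try apply H; lia). ring.
Qed.

Lemma rsum_ge_bump n g h m c : (forall i, (i < n)%nat -> h i <= g i) -> (m < n)%nat ->
  h m + c <= g m -> rsum n h + c <= rsum n g.
Proof.
  induction n as [|n IH]; intros H Hm Hc; [lia|].
  rewrite !rsum_S. destruct (Nat.eq_dec m n) as [->|Hne].
  - pose proof (rsum_le n h g (fun i Hi => H i ltac:(lia))). lra.
  - pose proof (IH (fun i Hi => H i ltac:(lia)) ltac:(lia) Hc). pose proof (H n ltac:(lia)). lra.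
Qed.

Definition pushed (d : nat) (y : config) (i j : nat) : bool :=
  ((i <=? j)%nat && (j <? d)%nat && Z.eqb (y j - y i)%Z (Z.of_nat (j - i)))%bool.

Lemma pushed_spec d y i j : pushed d y i j = true <->
  (i <= j < d)%nat /\ (y j - y i = Z.of_nat (j - i))%Z.
Proof.
  unfold pushed. rewrite !Bool.andb_true_iff, Nat.leb_le, Nat.ltb_lt, Z.eqb_eq. tauto.
Qed.

Lemma jump_pushed d y i j : jump d y i j = (y j + if pushed d y i j then 1 else 0)%Z.
Proof. unfold jump, pushed. destruct (_ && _ && _)%bool; lia. Qed.

Lemma pushed_lt d y i j : (j < i)%nat -> pushed d y i j = false.
Proof. intros H. apply Bool.not_true_iff_false. rewrite pushed_spec. lia. Qed.

Lemma pushed_self d y i : (i < d)%nat -> pushed d y i i = true.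
Proof. intros H. apply pushed_spec. rewrite Nat.sub_diag. lia. Qed.

Definition increasing (d : nat) (y : config) : Prop :=
  forall k, (S k < d)%nat -> (y k < y (S k))%Z.

Lemma increasing_sub d y i j : increasing d y -> (i <= j < d)%nat ->
  (Z.of_nat (j - i) <= y j - y i)%Z.
Proof.
  intros Hy Hij. induction j as [|j IH].
  - replace i with 0%nat by lia. simpl. lia.
  - destruct (Nat.eq_dec i (S j)) as [->|Hne].
    + rewrite Nat.sub_diag. lia.
    + specialize (IH ltac:(lia)). specialize (Hy j ltac:(lia)). lia.
Qed.

Lemma pushed_succ d y i m : increasing d y -> (i <= m)%nat -> (S m < d)%nat ->
  pushed d y i (S m) = (pushed d y i m && Z.eqb (gap y m) 0)%bool.
Proof.
  intros Hy Him Hm. unfold gap.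
  pose proof (increasing_sub d y i m Hy ltac:(lia)). pose proof (Hy m Hm).
  apply Bool.eq_iff_eq_true. rewrite Bool.andb_true_iff, Z.eqb_eq, !pushed_spec. lia.
Qed.

Lemma increasing_jump d y i : increasing d y -> increasing d (jump d y i).
Proof.
  intros Hy k Hk. rewrite !jump_pushed. specialize (Hy k Hk) as Hk'.
  destruct (Nat.le_gt_cases i k) as [Hik|Hik].
  - rewrite (pushed_succ d y i k Hy Hik Hk). unfold gap.
    destruct (pushed d y i k), (Z.eqb_spec (y (S k) - y k - 1) 0); simpl; lia.
  - rewrite (pushed_lt d y i k Hik). destruct (pushed d y i (S k)); lia.
Qed.

Definition indicator (b : bool) : R := if b then 1 else 0.

Definition posR (k : nat) (y : config) : R := IZR (y k).

Definition gapR (m : nat) (y : config) : R := IZR (gap y m).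

Lemma indicator_bounds b : 0 <= indicator b <= 1.
Proof. destruct b; simpl; lra. Qed.

Lemma posR_jump d y i k : posR k (jump d y i) = posR k y + indicator (pushed d y i k).
Proof. unfold posR. rewrite jump_pushed, plus_IZR. now destruct (pushed d y i k). Qed.

Lemma gapR_jump d y i m :
  gapR m (jump d y i) = gapR m y + indicator (pushed d y i (S m)) - indicator (pushed d y i m).
Proof.
  unfold gapR, gap. rewrite !minus_IZR. fold (posR (S m) (jump d y i)) (posR m (jump d y i)).
  rewrite !posR_jump. unfold posR. ring.
Qed.

Lemma gapR_nonneg d y m : increasing d y -> (S m < d)%nat -> 0 <= gapR m y.
Proof. intros Hy Hm. specialize (Hy m Hm). unfold gapR, gap. apply IZR_le. lia. Qed.

Definition gen (d : nat) (f : config -> R) (y : config) : R :=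
  rsum d (fun i => f (jump d y i) - f y).

Definition step_mean (d : nat) (f : config -> R) (y : config) : R :=
  / INR d * rsum d (fun i => f (jump d y i)).

Lemma gen_ext d f g y : (forall z, f z = g z) -> gen d f y = gen d g y.
Proof. intros H. unfold gen. apply rsum_ext. intros; now rewrite !H. Qed.

Lemma gen_plus d f g y : gen d (fun z => f z + g z) y = gen d f y + gen d g y.
Proof. unfold gen. rewrite <- rsum_plus. apply rsum_ext. intros; ring. Qed.

Lemma gen_scal d c f y : gen d (fun z => c * f z) y = c * gen d f y.
Proof. unfold gen. rewrite <- rsum_scal. apply rsum_ext. intros; ring. Qed.

Lemma step_mean_gen d f y : (0 < d)%nat -> step_mean d f y = f y + / INR d * gen d f y.
Proof.
  intros Hd. unfold step_mean, gen.
  rewrite (rsum_ext d _ (fun i => f (jump d y i) - f y + f y)) by (intros; ring).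
  rewrite rsum_plus, rsum_const. field. apply not_0_INR. lia.
Qed.

Lemma expect_steps_S d n f x :
  expect_steps d (S n) f x = step_mean d (fun y => expect_steps d n f y) x.
Proof. reflexivity. Qed.

Lemma expect_steps_ext d n f g x : (forall y, f y = g y) ->
  expect_steps d n f x = expect_steps d n g x.
Proof.
  revert x. induction n as [|n IH]; intros x H; [apply H|].
  rewrite !expect_steps_S. unfold step_mean. f_equal. apply rsum_ext. auto.
Qed.

Lemma expect_steps_succ d n f x :
  expect_steps d (S n) f x = expect_steps d n (step_mean d f) x.
Proof.
  revert x. induction n as [|n IH]; intros x; [reflexivity|].
  rewrite expect_steps_S, (expect_steps_S d n).
  apply (f_equal (Rmult (/ INR d))), rsum_ext. auto.
Qed.

Lemma expect_steps_plus d n f g x :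
  expect_steps d n (fun y => f y + g y) x = expect_steps d n f x + expect_steps d n g x.
Proof.
  revert x. induction n as [|n IH]; intros x; [reflexivity|].
  rewrite !expect_steps_S. unfold step_mean.
  rewrite (rsum_ext d _
             (fun i => expect_steps d n f (jump d x i) + expect_steps d n g (jump d x i))) by auto.
  rewrite rsum_plus. ring.
Qed.

Lemma expect_steps_scal d n c f x :
  expect_steps d n (fun y => c * f y) x = c * expect_steps d n f x.
Proof.
  revert x. induction n as [|n IH]; intros x; [reflexivity|].
  rewrite !expect_steps_S. unfold step_mean.
  rewrite (rsum_ext d _ (fun i => c * expect_steps d n f (jump d x i))) by auto.
  rewrite rsum_scal. ring.
Qed.

Lemma expect_steps_le d n f g x : (0 < d)%nat ->
  (forall y, increasing d y -> f y <= g y) -> increasing d x ->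
  expect_steps d n f x <= expect_steps d n g x.
Proof.
  intros Hd Hfg. revert x. induction n as [|n IH]; intros x Hx; [now apply Hfg|].
  rewrite !expect_steps_S. unfold step_mean. apply Rmult_le_compat_l.
  - apply Rlt_le, Rinv_0_lt_compat, lt_0_INR. lia.
  - apply rsum_le. intros i _. apply IH, increasing_jump, Hx.
Qed.

Lemma expect_steps_succ_sub d n f x : (0 < d)%nat ->
  expect_steps d (S n) f x - expect_steps d n f x = / INR d * expect_steps d n (gen d f) x.
Proof.
  intros Hd. rewrite expect_steps_succ, <- expect_steps_scal.
  rewrite (expect_steps_ext d n (step_mean d f) (fun y => f y + / INR d * gen d f y))
    by (intros; now apply step_mean_gen).
  rewrite expect_steps_plus. ring.
Qed.

Definition reach (x : config) (n : nat) (y : config) : Prop :=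
  forall k, (x k <= y k <= x k + Z.of_nat n)%Z.

Lemma reach_0 x : reach x 0 x.
Proof. intros k. lia. Qed.

Lemma reach_jump d x n y i : reach x n y -> reach x (S n) (jump d y i).
Proof. intros H k. specialize (H k). rewrite jump_pushed. destruct (pushed d y i k); lia. Qed.

Lemma expect_steps_abs_le d n f x B : (0 < d)%nat ->
  (forall y, reach x n y -> Rabs (f y) <= B) -> Rabs (expect_steps d n f x) <= B.
Proof.
  intros Hd. revert f. induction n as [|n IH]; intros f Hf.
  - apply Hf, reach_0.
  - rewrite expect_steps_succ. apply IH. intros y Hy. unfold step_mean.
    assert (0 < INR d) by (apply lt_0_INR; lia).
    rewrite Rabs_mult, Rabs_inv, (Rabs_pos_eq (INR d)) by lra.
    apply (Rmult_le_reg_l (INR d)); [lra|].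
    rewrite <- Rmult_assoc, Rinv_r, Rmult_1_l by lra.
    apply rsum_abs_le. intros i _. apply Hf, reach_jump, Hy.
Qed.

Definition exp_bounded_from (x0 : config) (f : config -> R) : Prop :=
  exists M K, 0 <= K /\ forall n y, reach x0 n y -> Rabs (f y) <= M * K ^ n.

Lemma exp_bounded_expect_steps d x0 f : (0 < d)%nat -> exp_bounded_from x0 f ->
  exp_bounded (fun n => expect_steps d n f x0).
Proof.
  intros Hd [M [K [HK Hf]]]. exists M, K. split; [exact HK|].
  intros n. apply expect_steps_abs_le; auto.
Qed.

Lemma exp_bounded_from_ext x0 f g : (forall y, f y = g y) ->
  exp_bounded_from x0 f -> exp_bounded_from x0 g.
Proof.
  intros E [M [K [HK Hf]]]. exists M, K. split; [exact HK|].
  intros n y Hy. rewrite <- E. auto.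
Qed.

Lemma exp_bounded_from_const x0 c : exp_bounded_from x0 (fun _ => c).
Proof. exists (Rabs c), 1. split; [lra|]. intros n y _. rewrite pow1. lra. Qed.

Lemma exp_bound_nonneg x0 f M K : (forall n y, reach x0 n y -> Rabs (f y) <= M * K ^ n) -> 0 <= M.
Proof.
  intros Hf. pose proof (Hf 0%nat x0 (reach_0 x0)). pose proof (Rabs_pos (f x0)). simpl in *. lra.
Qed.

Lemma exp_bounded_from_plus x0 f g : exp_bounded_from x0 f -> exp_bounded_from x0 g ->
  exp_bounded_from x0 (fun y => f y + g y).
Proof.
  intros [M1 [K1 [HK1 Hf]]] [M2 [K2 [HK2 Hg]]].
  pose proof (exp_bound_nonneg x0 f M1 K1 Hf). pose proof (exp_bound_nonneg x0 g M2 K2 Hg).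
  exists (M1 + M2), (Rmax K1 K2). split; [apply (Rle_trans _ K1); [lra | apply Rmax_l]|].
  intros n y Hy. eapply Rle_trans; [apply Rabs_triang|].
  pose proof (Hf n y Hy). pose proof (Hg n y Hy).
  pose proof (pow_incr K1 (Rmax K1 K2) n (conj HK1 (Rmax_l K1 K2))).
  pose proof (pow_incr K2 (Rmax K1 K2) n (conj HK2 (Rmax_r K1 K2))).
  nra.
Qed.

Lemma exp_bounded_from_mult x0 f g : exp_bounded_from x0 f -> exp_bounded_from x0 g ->
  exp_bounded_from x0 (fun y => f y * g y).
Proof.
  intros [M1 [K1 [HK1 Hf]]] [M2 [K2 [HK2 Hg]]].
  exists (M1 * M2), (K1 * K2). split; [nra|].
  intros n y Hy. rewrite Rabs_mult, Rpow_mult_distr.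
  replace (M1 * M2 * (K1 ^ n * K2 ^ n)) with ((M1 * K1 ^ n) * (M2 * K2 ^ n)) by ring.
  apply Rmult_le_compat; auto using Rabs_pos.
Qed.

Lemma exp_bounded_from_pow x0 f p : exp_bounded_from x0 f ->
  exp_bounded_from x0 (fun y => f y ^ p).
Proof.
  intros Hf. induction p as [|p IH]; [exact (exp_bounded_from_const x0 1)|].
  exact (exp_bounded_from_mult x0 f _ Hf IH).
Qed.

Lemma exp_bounded_from_minus x0 f g : exp_bounded_from x0 f -> exp_bounded_from x0 g ->
  exp_bounded_from x0 (fun y => f y - g y).
Proof.
  intros Hf Hg. apply (exp_bounded_from_ext x0 (fun y => f y + (-1) * g y)); [intros; ring|].
  apply exp_bounded_from_plus, exp_bounded_from_mult; auto using exp_bounded_from_const.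
Qed.

Lemma exp_bounded_from_rsum x0 n g : (forall k, exp_bounded_from x0 (g k)) ->
  exp_bounded_from x0 (fun y => rsum n (fun k => g k y)).
Proof.
  intros Hg. induction n as [|n IH]; [exact (exp_bounded_from_const x0 0)|].
  apply (exp_bounded_from_ext x0 (fun y => rsum n (fun k => g k y) + g n y));
    [intros; now rewrite rsum_S|].
  now apply exp_bounded_from_plus.
Qed.

Lemma exp_bounded_from_gen d x0 f : exp_bounded_from x0 f -> exp_bounded_from x0 (gen d f).
Proof.
  intros [M [K [HK Hf]]]. exists (INR d * (M * K + M)), K. split; [exact HK|].
  intros n y Hy. rewrite Rmult_assoc. unfold gen. apply rsum_abs_le. intros i _.
  eapply Rle_trans; [apply Rabs_triang|]. rewrite Rabs_Ropp.
  pose proof (Hf (S n) _ (reach_jump d x0 n y i Hy)). pose proof (Hf n y Hy).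
  simpl in *. lra.
Qed.

Lemma pow2_ge_S n : INR n + 1 <= 2 ^ n.
Proof.
  induction n as [|n IH]; [simpl; lra|].
  rewrite S_INR. simpl. pose proof (pos_INR n). lra.
Qed.

Lemma exp_bounded_from_posR x0 k : exp_bounded_from x0 (posR k).
Proof.
  set (c := Rabs (IZR (x0 k))).
  exists (c + 1), 2. split; [lra|]. intros n y Hy.
  assert (Hyk : Rabs (posR k y) <= c + INR n).
  { specialize (Hy k). unfold posR.
    assert (IZR (x0 k) <= IZR (y k) <= IZR (x0 k) + INR n).
    { rewrite INR_IZR_INZ, <- plus_IZR. split; apply IZR_le; lia. }
    pose proof (Rle_abs (IZR (x0 k))). pose proof (Rle_abs (- IZR (x0 k))).
    rewrite Rabs_Ropp in *. pose proof (pos_INR n). apply Rabs_le. unfold c. lra. }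
  pose proof (pow2_ge_S n). pose proof (pos_INR n). assert (0 <= c) by apply Rabs_pos.
  nra.
Qed.

Lemma exp_bounded_from_gapR x0 m : exp_bounded_from x0 (gapR m).
Proof.
  apply (exp_bounded_from_ext x0 (fun y => posR (S m) y - posR m y - 1)).
  - intros y. unfold gapR, gap, posR. now rewrite !minus_IZR.
  - apply exp_bounded_from_minus; [apply exp_bounded_from_minus|]; 
      auto using exp_bounded_from_posR, exp_bounded_from_const.
Qed.

Lemma exp_bounded_from_indB x0 d : exp_bounded_from x0 (indB d).
Proof.
  exists 1, 1. split; [lra|]. intros n y _. rewrite pow1. unfold indB.
  destruct existsb; rewrite ?Rabs_R1, ?Rabs_R0; lra.
Qed.

Create HintDb exp_bounded.
#[export] Hint Resolve exp_bounded_from_const exp_bounded_from_plus exp_bounded_from_mult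
  exp_bounded_from_pow exp_bounded_from_minus exp_bounded_from_rsum exp_bounded_from_gen
  exp_bounded_from_posR exp_bounded_from_gapR exp_bounded_from_indB : exp_bounded.

Section Expectation.

Variables (d : nat) (x0 : config).
Hypothesis d_pos : (0 < d)%nat.

Lemma expect_at_poisson t f :
  expect_at d t f x0 = poisson_mean (INR d * t) (fun n => expect_steps d n f x0).
Proof. reflexivity. Qed.

Lemma expect_at_0 f : expect_at d 0 f x0 = f x0.
Proof. rewrite expect_at_poisson, Rmult_0_r. apply poisson_mean_0. Qed.

Lemma expect_at_ext t f g : (forall y, f y = g y) -> expect_at d t f x0 = expect_at d t g x0.
Proof.
  intros H. rewrite !expect_at_poisson. apply poisson_mean_ext.
  intros; now apply expect_steps_ext.
Qed.

Lemma expect_at_scal t c f : expect_at d t (fun y => c * f y) x0 = c * expect_at d t f x0.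
Proof.
  rewrite !expect_at_poisson, <- poisson_mean_scal.
  apply poisson_mean_ext. intros; apply expect_steps_scal.
Qed.

Lemma expect_at_plus t f g : exp_bounded_from x0 f -> exp_bounded_from x0 g ->
  expect_at d t (fun y => f y + g y) x0 = expect_at d t f x0 + expect_at d t g x0.
Proof.
  intros Hf Hg. rewrite !expect_at_poisson.
  rewrite <- poisson_mean_plus by now apply exp_bounded_expect_steps.
  apply poisson_mean_ext. intros; apply expect_steps_plus.
Qed.

Lemma expect_at_const t c : expect_at d t (fun _ => c) x0 = c.
Proof.
  rewrite expect_at_poisson.
  transitivity (poisson_mean (INR d * t) (fun _ => c)); [|apply poisson_mean_const].
  apply poisson_mean_ext. intros n. induction n as [|n IH]; [reflexivity|].
  rewrite expect_steps_succ. rewrite (expect_steps_ext d n _ (fun _ => c)); [exact IH|].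
  intros y. rewrite step_mean_gen by exact d_pos. unfold gen.
  rewrite (rsum_ext d _ (fun _ => 0)) by (intros; ring). rewrite rsum_const. ring.
Qed.

Lemma expect_at_le t f g : exp_bounded_from x0 f -> exp_bounded_from x0 g ->
  increasing d x0 -> 0 <= t -> (forall y, increasing d y -> f y <= g y) ->
  expect_at d t f x0 <= expect_at d t g x0.
Proof.
  intros Hf Hg Hx0 Ht Hfg. rewrite !expect_at_poisson.
  apply poisson_mean_le; try now apply exp_bounded_expect_steps.
  - apply Rmult_le_pos; [apply pos_INR | exact Ht].
  - intros n. now apply expect_steps_le.
Qed.

Lemma is_derive_expect_at t f : exp_bounded_from x0 f ->
  is_derive (fun t => expect_at d t f x0) t (expect_at d t (gen d f) x0).
Proof.
  intros Hf.
  assert (Hdiff : forall n, expect_steps d (S n) f x0 - expect_steps d n f x0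
                            = / INR d * expect_steps d n (gen d f) x0)
    by (intros; now apply expect_steps_succ_sub).
  replace (expect_at d t (gen d f) x0)
    with (INR d * poisson_mean (INR d * t)
                    (fun n => expect_steps d (S n) f x0 - expect_steps d n f x0)).
  - apply (is_derive_comp (fun l => poisson_mean l (fun n => expect_steps d n f x0))
                          (fun t => INR d * t)).
    + now apply is_derive_poisson_mean, exp_bounded_expect_steps.
    + auto_derive; auto. ring.
  - rewrite (poisson_mean_ext _ _ _ Hdiff), poisson_mean_scal, expect_at_poisson.
    field. apply not_0_INR. lia.
Qed.

Lemma continuous_expect_at t f : exp_bounded_from x0 f ->
  continuous (fun t => expect_at d t f x0) t.
Proof.
  intros Hf. apply (@ex_derive_continuous R_AbsRing R_NormedModule).
  eexists. now apply is_derive_expect_at.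
Qed.

Lemma RInt_expect_at_gen T f : exp_bounded_from x0 f ->
  RInt (fun s => expect_at d s (gen d f) x0) 0 T = expect_at d T f x0 - f x0.
Proof.
  intros Hf. rewrite <- (expect_at_0 f). apply is_RInt_unique.
  apply (is_RInt_derive (fun t => expect_at d t f x0)); intros.
  - now apply is_derive_expect_at.
  - now apply continuous_expect_at, exp_bounded_from_gen.
Qed.

Lemma expect_at_sub_le_of_gen_le f F dF T : exp_bounded_from x0 f -> 0 <= T ->
  (forall t, 0 <= t <= T -> is_derive F t (dF t)) ->
  (forall t, 0 <= t <= T -> expect_at d t (gen d f) x0 <= dF t) ->
  expect_at d T f x0 - f x0 <= F T - F 0.
Proof.
  intros Hf HT HF Hle.
  pose proof (le_of_is_derive_nonpos (fun t => expect_at d t f x0 - F t)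
                (fun t => expect_at d t (gen d f) x0 - dF t) 0 T HT) as H.
  simpl in H. rewrite expect_at_0 in H.
  enough (expect_at d T f x0 - F T <= f x0 - F 0) by lra.
  apply H.
  - intros t Ht. apply (is_derive_minus (fun t => expect_at d t f x0) F).
    + now apply is_derive_expect_at.
    + now apply HF.
  - intros t Ht. specialize (Hle t Ht). lra.
Qed.

Hypothesis x0_increasing : increasing d x0.

Lemma RInt_expect_at_le f g T : exp_bounded_from x0 f -> exp_bounded_from x0 g -> 0 <= T ->
  (forall y, increasing d y -> f y <= g y) ->
  RInt (fun s => expect_at d s f x0) 0 T <= RInt (fun s => expect_at d s g x0) 0 T.
Proof.
  intros Hf Hg HT Hfg. apply RInt_le; [exact HT | | |].
  - apply (@ex_RInt_continuous R_CompleteNormedModule). intros; now apply continuous_expect_at.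
  - apply (@ex_RInt_continuous R_CompleteNormedModule). intros; now apply continuous_expect_at.
  - intros s Hs. apply expect_at_le; auto. lra.
Qed.

Lemma expect_at_le_linear f c T : exp_bounded_from x0 f -> 0 <= T ->
  (forall y, increasing d y -> gen d f y <= c) -> expect_at d T f x0 <= f x0 + c * T.
Proof.
  intros Hf HT Hc.
  enough (expect_at d T f x0 - f x0 <= c * T - c * 0) by lra.
  apply (expect_at_sub_le_of_gen_le f (fun t => c * t) (fun _ => c)); auto.
  - intros t _. auto_derive; auto. ring.
  - intros t Ht. rewrite <- (expect_at_const t c).
    apply expect_at_le; auto with exp_bounded. lra.
Qed.

Lemma expect_at_ge_linear f c T : exp_bounded_from x0 f -> 0 <= T ->
  (forall y, increasing d y -> c <= gen d f y) -> f x0 + c * T <= expect_at d T f x0.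
Proof.
  intros Hf HT Hc.
  pose proof (expect_at_le_linear (fun y => -1 * f y) (- c) T) as H.
  rewrite expect_at_scal in H.
  enough (-1 * expect_at d T f x0 <= -1 * f x0 + - c * T) by lra.
  apply H; auto with exp_bounded.
  intros y Hy. rewrite gen_scal. specialize (Hc y Hy). lra.
Qed.

Lemma expect_at_le_of_sq_le f b T : exp_bounded_from x0 f -> 0 <= T -> 0 < b ->
  expect_at d T (fun y => f y ^ 2) x0 <= b ^ 2 -> expect_at d T f x0 <= b.
Proof.
  intros Hf HT Hb Hsq.
  assert (Hamgm : expect_at d T f x0 <= / (2 * b) * expect_at d T (fun y => f y ^ 2) x0 + b / 2).
  { rewrite <- expect_at_scal, <- (expect_at_const T (b / 2)), <- expect_at_plus
      by auto with exp_bounded.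
    apply expect_at_le; auto with exp_bounded.
    intros y _. apply (Rmult_le_reg_l (2 * b)); [lra|].
    field_simplify; [|lra]. pose proof (pow2_ge_0 (f y - b)). nra. }
  assert (/ (2 * b) * expect_at d T (fun y => f y ^ 2) x0 <= / (2 * b) * b ^ 2)
    by (apply Rmult_le_compat_l; [apply Rlt_le, Rinv_0_lt_compat|]; lra).
  replace (/ (2 * b) * b ^ 2) with (b / 2) in H by (field; lra).
  lra.
Qed.

(* [W >= 3 W^2 / (2 a) - W^4 / (2 a^3)] for [W >= 0], since the difference
   is [W (W - a)^2 (W + 2 a) / (2 a^3)]. *)
Lemma expect_at_moment_lower f a T : exp_bounded_from x0 f -> 0 <= T -> 0 < a ->
  (forall y, increasing d y -> 0 <= f y) ->
  3 / (2 * a) * expect_at d T (fun y => f y ^ 2) x0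
    - / (2 * a ^ 3) * expect_at d T (fun y => f y ^ 4) x0 <= expect_at d T f x0.
Proof.
  intros Hf HT Ha Hpos.
  replace (3 / (2 * a) * expect_at d T (fun y => f y ^ 2) x0
            - / (2 * a ^ 3) * expect_at d T (fun y => f y ^ 4) x0)
    with (expect_at d T (fun y => 3 / (2 * a) * f y ^ 2 + -1 * (/ (2 * a ^ 3) * f y ^ 4)) x0)
    by (rewrite expect_at_plus, !expect_at_scal by auto with exp_bounded; ring).
  apply expect_at_le; auto with exp_bounded.
  intros y Hy. specialize (Hpos y Hy).
  assert (0 <= f y * (f y - a) ^ 2 * (f y + 2 * a))
    by (apply Rmult_le_pos; [apply Rmult_le_pos, pow2_ge_0|]; lra).
  assert (0 < a ^ 3) by (apply pow_lt, Ha).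
  apply (Rmult_le_reg_l (2 * a ^ 3)); [lra|].
  field_simplify; [|lra..]. nra.
Qed.

End Expectation.

Lemma indB_gap_0 d y m : (S m < d)%nat -> gap y m = 0%Z -> indB d y = 1.
Proof.
  intros Hm Hg. unfold indB.
  replace (existsb _ _) with true; [reflexivity|]. symmetry.
  apply existsb_exists. exists m. split; [apply in_seq; lia | now apply Z.eqb_eq].
Qed.

Lemma indB_cases d y :
  indB d y = 0 \/ (indB d y = 1 /\ exists m, (S m < d)%nat /\ gap y m = 0%Z).
Proof.
  unfold indB. destruct (existsb _ _) eqn:E; [right | now left].
  split; [reflexivity|]. apply existsb_exists in E as [m [Hm Hg]].
  apply in_seq in Hm. apply Z.eqb_eq in Hg. exists m. split; [lia | exact Hg].
Qed.

Lemma gen_posR_0 d y : (0 < d)%nat -> gen d (posR 0) y = 1.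
Proof.
  intros Hd. unfold gen.
  rewrite (rsum_ext d _ (fun i => indicator (pushed d y i 0))) by (intros; rewrite posR_jump; ring).
  rewrite (rsum_prefix_eq 1) by (lia || (intros; rewrite pushed_lt by lia; reflexivity)).
  rewrite rsum_S, rsum_0, pushed_self by exact Hd. simpl. ring.
Qed.

(* Clock [i <= m] shrinks gap [m] iff the block it pushes ends at particle [m];
   clock [m + 1] widens it; the other clocks leave it unchanged. *)
Lemma gen_gapR_fun d y m (h : R -> R) : increasing d y -> (S m < d)%nat ->
  gen d (fun z => h (gapR m z)) y =
  rsum (S m) (fun i => h (gapR m y - indicator (pushed d y i m && negb (Z.eqb (gap y m) 0)))
                       - h (gapR m y))
  + (h (gapR m y + 1) - h (gapR m y)).
Proof.
  intros Hy Hm. unfold gen.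
  rewrite (rsum_prefix_eq (S (S m))); [|lia|].
  2:{ intros i Hi. rewrite gapR_jump, !pushed_lt by lia. simpl.
      replace (gapR m y + 0 - 0) with (gapR m y) by ring. ring. }
  rewrite rsum_S, gapR_jump, pushed_self, pushed_lt by lia. f_equal.
  - apply rsum_ext. intros i Hi. rewrite gapR_jump, pushed_succ by (auto; lia).
    f_equal. f_equal.
    destruct (pushed d y i m), (Z.eqb (gap y m) 0); simpl; ring.
  - simpl. f_equal. f_equal. ring.
Qed.

Lemma gen_gapR_0_fun d y (h : R -> R) : increasing d y -> (2 <= d)%nat ->
  gen d (fun z => h (gapR 0 z)) y =
  h (gapR 0 y - indicator (negb (Z.eqb (gap y 0) 0))) + h (gapR 0 y + 1) - 2 * h (gapR 0 y).
Proof.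
  intros Hy Hd. rewrite gen_gapR_fun by (auto; lia).
  rewrite rsum_S, rsum_0, pushed_self by lia. simpl andb. ring.
Qed.

Lemma gapR_eq_0 y m : gapR m y = 0 <-> gap y m = 0%Z.
Proof. unfold gapR. split; [apply eq_IZR | intros ->; reflexivity]. Qed.

Lemma gen_gapR_0_le_indB d y : increasing d y -> (2 <= d)%nat -> gen d (gapR 0) y <= indB d y.
Proof.
  intros Hy Hd. change (gen d (gapR 0) y) with (gen d (fun z => (fun w => w) (gapR 0 z)) y).
  rewrite gen_gapR_0_fun by auto.
  destruct (Z.eqb_spec (gap y 0) 0) as [Hg|Hg]; simpl.
  - rewrite (indB_gap_0 d y 0) by (auto; lia). lra.
  - pose proof (indB_cases d y). lra.
Qed.

Lemma gen_gapR_0_sq_ge d y : increasing d y -> (2 <= d)%nat -> 1 <= gen d (fun z => gapR 0 z ^ 2) y.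
Proof.
  intros Hy Hd. rewrite (gen_gapR_0_fun d y (fun w => w ^ 2)) by auto.
  destruct (Z.eqb_spec (gap y 0) 0) as [Hg|Hg]; simpl.
  - apply gapR_eq_0 in Hg. rewrite Hg. lra.
  - nra.
Qed.

Lemma gen_gapR_0_pow4_le d y : increasing d y -> (2 <= d)%nat ->
  gen d (fun z => gapR 0 z ^ 4) y <= 12 * gapR 0 y ^ 2 + 2.
Proof.
  intros Hy Hd. rewrite (gen_gapR_0_fun d y (fun w => w ^ 4)) by auto.
  destruct (Z.eqb_spec (gap y 0) 0) as [Hg|Hg]; simpl.
  - apply gapR_eq_0 in Hg. rewrite Hg. lra.
  - nra.
Qed.

Lemma gen_gapR_sq_le d y m : increasing d y -> (S m < d)%nat ->
  gen d (fun z => gapR m z ^ 2) y <= 2.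
Proof.
  intros Hy Hm. rewrite (gen_gapR_fun d y m (fun w => w ^ 2)) by auto.
  set (W := gapR m y). pose proof (gapR_nonneg d y m Hy Hm) as HW. fold W in HW.
  destruct (Z.eqb_spec (gap y m) 0) as [Hg|Hg]; cbn [negb].
  - apply gapR_eq_0 in Hg. fold W in Hg. rewrite Hg.
    rewrite (rsum_ext _ _ (fun _ => 0)) by (intros i _; rewrite Bool.andb_false_r; simpl; ring).
    rewrite rsum_const. lra.
  - assert (HW1 : 1 <= W).
    { unfold W, gapR. apply IZR_le. unfold gap in *. specialize (Hy m Hm). lia. }
    rewrite rsum_S, pushed_self by lia. cbn [negb andb indicator].
    assert (rsum m (fun i => (W - indicator (pushed d y i m && true)) ^ 2 - W ^ 2) <= 0).
    { rewrite <- (Rmult_0_r (INR m)), <- rsum_const. apply rsum_le. intros i _.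
      destruct (pushed d y i m && true)%bool; simpl; nra. }
    lra.
Qed.

Lemma gen_rsum_posR d y : gen d (fun z => rsum d (fun k => posR k z)) y =
  rsum d (fun i => rsum d (fun k => indicator (pushed d y i k))).
Proof.
  unfold gen. apply rsum_ext. intros i _.
  rewrite (rsum_ext d (fun k => posR k (jump d y i))
                      (fun k => posR k y + indicator (pushed d y i k)))
    by (intros; apply posR_jump).
  rewrite rsum_plus. ring.
Qed.

Lemma rsum_indicator_pushed_ge_1 d y i : (i < d)%nat ->
  1 <= rsum d (fun k => indicator (pushed d y i k)).
Proof.
  intros Hi. eapply Rle_trans; [|apply (rsum_prefix_le (S i)); [lia|]].
  - rewrite rsum_S, pushed_self by exact Hi. simpl.
    pose proof (rsum_prefix_le 0 i (fun k => indicator (pushed d y i k)) ltac:(lia)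
                  (fun k _ => proj1 (indicator_bounds _))).
    rewrite rsum_0 in *. lra.
  - intros; apply indicator_bounds.
Qed.

Lemma rsum_indicator_pushed_ge_2 d y m : (S m < d)%nat -> gap y m = 0%Z ->
  2 <= rsum d (fun k => indicator (pushed d y m k)).
Proof.
  intros Hm Hg. eapply Rle_trans; [|apply (rsum_prefix_le (S (S m))); [lia|]].
  - rewrite !rsum_S, pushed_self by lia.
    replace (pushed d y m (S m)) with true.
    + pose proof (rsum_prefix_le 0 m (fun k => indicator (pushed d y m k)) ltac:(lia)
                    (fun k _ => proj1 (indicator_bounds _))).
      rewrite rsum_0 in *. simpl. lra.
    + symmetry. apply pushed_spec. replace (S m - m)%nat with 1%nat by lia. unfold gap in Hg. lia.
  - intros; apply indicator_bounds.
Qed.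

Lemma gen_rsum_posR_ge d y : (0 < d)%nat ->
  INR d + indB d y <= gen d (fun z => rsum d (fun k => posR k z)) y.
Proof.
  intros Hd. rewrite gen_rsum_posR.
  destruct (indB_cases d y) as [-> | [-> [m [Hm Hg]]]].
  - rewrite Rplus_0_r, <- (Rmult_1_r (INR d)), <- rsum_const.
    apply rsum_le. intros i Hi. now apply rsum_indicator_pushed_ge_1.
  - rewrite <- (Rmult_1_r (INR d)), <- rsum_const.
    apply (rsum_ge_bump _ _ _ m); [|lia|].
    + intros i Hi. now apply rsum_indicator_pushed_ge_1.
    + pose proof (rsum_indicator_pushed_ge_2 d y m Hm Hg). lra.
Qed.

Definition spread (k : nat) (y : config) : R := rsum k (fun m => gapR m y + 1).

Lemma exp_bounded_from_spread x0 k : exp_bounded_from x0 (spread k).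
Proof. unfold spread. auto with exp_bounded. Qed.

#[export] Hint Resolve exp_bounded_from_spread : exp_bounded.

Lemma posR_spread k y : posR k y = posR 0 y + spread k y.
Proof.
  unfold spread. induction k as [|k IH]; [rewrite rsum_0; ring|].
  rewrite rsum_S, <- Rplus_assoc, <- IH. unfold gapR, gap, posR. rewrite !minus_IZR. ring.
Qed.

Lemma gen_total_spread_ge d y : (0 < d)%nat ->
  indB d y <= gen d (fun z => rsum d (fun k => spread k z)) y.
Proof.
  intros Hd.
  rewrite (gen_ext d _ (fun z => rsum d (fun k => posR k z) + - INR d * posR 0 z)).
  - rewrite gen_plus, gen_scal, gen_posR_0 by exact Hd.
    pose proof (gen_rsum_posR_ge d y Hd). lra.
  - intros z. rewrite (rsum_ext d _ (fun k => posR k z + -1 * posR 0 z))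
      by (intros; rewrite (posR_spread _ z); ring).
    rewrite rsum_plus, rsum_scal, rsum_const. ring.
Qed.

Definition drift_O_sqrt (d : nat) (x0 : config) (f : config -> R) : Prop :=
  exists C, forall T, 1 <= T -> Rabs (expect_at d T f x0 - f x0) <= C * sqrt T.

Lemma sqrt_ge_1 T : 1 <= T -> 1 <= sqrt T.
Proof. intros HT. rewrite <- sqrt_1. now apply sqrt_le_1_alt. Qed.

Section Drift.

Variables (d : nat) (x0 : config).
Hypothesis d_pos : (0 < d)%nat.

Lemma drift_O_sqrt_plus f g : exp_bounded_from x0 f -> exp_bounded_from x0 g ->
  drift_O_sqrt d x0 f -> drift_O_sqrt d x0 g -> drift_O_sqrt d x0 (fun y => f y + g y).
Proof.
  intros Hf Hg [C1 H1] [C2 H2]. exists (C1 + C2). intros T HT.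
  rewrite expect_at_plus by auto.
  replace (expect_at d T f x0 + expect_at d T g x0 - (f x0 + g x0))
    with ((expect_at d T f x0 - f x0) + (expect_at d T g x0 - g x0)) by ring.
  eapply Rle_trans; [apply Rabs_triang|].
  pose proof (H1 T HT). pose proof (H2 T HT). lra.
Qed.

Lemma drift_O_sqrt_const c : drift_O_sqrt d x0 (fun _ => c).
Proof.
  exists 0. intros T HT. rewrite expect_at_const by exact d_pos.
  rewrite Rminus_diag, Rabs_R0. lra.
Qed.

Lemma drift_O_sqrt_rsum n g : (forall k, exp_bounded_from x0 (g k)) ->
  (forall k, (k < n)%nat -> drift_O_sqrt d x0 (g k)) ->
  drift_O_sqrt d x0 (fun y => rsum n (fun k => g k y)).
Proof.
  intros Hb Hg. induction n as [|n IH]; [exact (drift_O_sqrt_const 0)|].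
  assert (E : forall T, expect_at d T (fun y => rsum (S n) (fun k => g k y)) x0
                        = expect_at d T (fun y => rsum n (fun k => g k y) + g n y) x0)
    by (intros; apply expect_at_ext; intros; apply rsum_S).
  destruct (drift_O_sqrt_plus _ _ (exp_bounded_from_rsum x0 n g Hb) (Hb n)
              (IH (fun k Hk => Hg k ltac:(lia))) (Hg n ltac:(lia))) as [C HC].
  exists C. intros T HT. rewrite E, rsum_S. apply HC, HT.
Qed.

End Drift.

Section PushTASEP.

Variables (d : nat) (x0 : config).
Hypothesis d_ge_2 : (2 <= d)%nat.
Hypothesis x0_increasing : increasing d x0.

Let d_pos : (0 < d)%nat.
Proof. lia. Qed.

Lemma expect_at_posR_0 T : 0 <= T -> expect_at d T (posR 0) x0 = posR 0 x0 + T.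
Proof.
  intros HT.
  assert (Hgen : forall y, gen d (posR 0) y = 1) by (intros; now apply gen_posR_0).
  pose proof (expect_at_le_linear d x0 d_pos x0_increasing (posR 0) 1 T) as Hle.
  pose proof (expect_at_ge_linear d x0 d_pos x0_increasing (posR 0) 1 T) as Hge.
  enough (posR 0 x0 + 1 * T <= expect_at d T (posR 0) x0 <= posR 0 x0 + 1 * T) by lra.
  split; [apply Hge | apply Hle]; auto with exp_bounded; intros y Hy; rewrite Hgen; auto; lra.
Qed.

Lemma expect_at_gapR_sq_le m T : (S m < d)%nat -> 0 <= T ->
  expect_at d T (fun y => gapR m y ^ 2) x0 <= gapR m x0 ^ 2 + 2 * T.
Proof.
  intros Hm HT. apply (expect_at_le_linear d x0 d_pos x0_increasing); auto with exp_bounded.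
  intros y Hy. now apply gen_gapR_sq_le.
Qed.

Lemma expect_at_gapR_le m T : (S m < d)%nat -> 1 <= T ->
  expect_at d T (gapR m) x0 <= (Rabs (gapR m x0) + 2) * sqrt T.
Proof.
  intros Hm HT. pose proof (sqrt_ge_1 T HT). pose proof (Rabs_pos (gapR m x0)).
  apply expect_at_le_of_sq_le; auto with exp_bounded; [lra | nra |].
  eapply Rle_trans; [apply expect_at_gapR_sq_le; auto; lra|].
  rewrite Rpow_mult_distr, pow2_sqrt, <- pow2_abs by lra. nra.
Qed.

Lemma drift_O_sqrt_gapR m : (S m < d)%nat -> drift_O_sqrt d x0 (gapR m).
Proof.
  intros Hm. set (w := gapR m x0). exists (2 * Rabs w + 2). intros T HT.
  pose proof (expect_at_gapR_le m T Hm HT) as Hup. fold w in Hup.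
  assert (Hlow : 0 <= expect_at d T (gapR m) x0).
  { rewrite <- (expect_at_const d x0 d_pos T 0).
    apply expect_at_le; auto with exp_bounded; [lra|].
    intros y Hy. now apply (gapR_nonneg d). }
  pose proof (sqrt_ge_1 T HT). pose proof (Rabs_pos w).
  assert (Rabs w <= Rabs w * sqrt T) by nra.
  pose proof (Rle_abs w). pose proof (Rle_abs (- w)). rewrite Rabs_Ropp in *.
  apply Rabs_le. fold w. lra.
Qed.

Lemma drift_O_sqrt_spread k : (k < d)%nat -> drift_O_sqrt d x0 (spread k).
Proof.
  intros Hk. apply (drift_O_sqrt_rsum d x0 d_pos k (fun m y => gapR m y + 1));
    [auto with exp_bounded|].
  intros m Hm. apply drift_O_sqrt_plus; auto with exp_bounded.
  - now apply drift_O_sqrt_gapR; lia.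
  - apply drift_O_sqrt_const, d_pos.
Qed.

Lemma expected_displacement_spread i T : 0 <= T ->
  expected_displacement d T x0 i - T = expect_at d T (spread i) x0 - spread i x0.
Proof.
  intros HT. unfold expected_displacement.
  rewrite (expect_at_ext d x0 T _ (fun y => posR 0 y + spread i y + - posR i x0))
    by (intros y; rewrite minus_IZR; fold (posR i y) (posR i x0); rewrite (posR_spread i y); ring).
  rewrite !expect_at_plus, expect_at_const, expect_at_posR_0 by auto with exp_bounded.
  rewrite (posR_spread i x0). ring.
Qed.

Lemma expected_displacement_O_sqrt i : (i < d)%nat ->
  exists C T0, forall T, T0 <= T -> Rabs (expected_displacement d T x0 i - T) <= C * sqrt T.
Proof.
  intros Hi. destruct (drift_O_sqrt_spread i Hi) as [C HC]. exists C, 1.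
  intros T HT. rewrite expected_displacement_spread by lra. now apply HC.
Qed.

Lemma expected_occupation_le : exists C, 0 < C /\
  forall T, 1 <= T -> expected_occupation d T x0 <= C * sqrt T.
Proof.
  set (Psi := fun y => rsum d (fun k => spread k y)).
  assert (HPsi : exp_bounded_from x0 Psi) by (unfold Psi; auto with exp_bounded).
  destruct (drift_O_sqrt_rsum d x0 d_pos d spread (exp_bounded_from_spread x0)
              drift_O_sqrt_spread) as [C HC].
  exists (Rabs C + 1). split; [pose proof (Rabs_pos C); lra|]. intros T HT.
  unfold expected_occupation.
  eapply Rle_trans.
  { apply (RInt_expect_at_le d x0 d_pos x0_increasing _ (gen d Psi)); auto with exp_bounded; [lra|].
    intros y _. now apply gen_total_spread_ge. }
  rewrite RInt_expect_at_gen by auto.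
  specialize (HC T HT). fold Psi in HC. apply Rabs_le_between in HC.
  change (Psi x0) with (rsum d (fun k => spread k x0)).
  assert (C * sqrt T <= Rabs C * sqrt T)
    by (apply Rmult_le_compat_r; [apply sqrt_pos | apply Rle_abs]).
  pose proof (sqrt_pos T). lra.
Qed.

Lemma expect_at_gapR_0_sq_ge T : 0 <= T -> T <= expect_at d T (fun y => gapR 0 y ^ 2) x0.
Proof.
  intros HT. pose proof (pow2_ge_0 (gapR 0 x0)).
  enough (gapR 0 x0 ^ 2 + 1 * T <= expect_at d T (fun y => gapR 0 y ^ 2) x0) by lra.
  apply (expect_at_ge_linear d x0 d_pos x0_increasing (fun y => gapR 0 y ^ 2));
    auto with exp_bounded.
  intros y Hy. now apply gen_gapR_0_sq_ge.
Qed.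

Lemma expect_at_gapR_0_pow4_le T : 1 <= T ->
  expect_at d T (fun y => gapR 0 y ^ 4) x0 <= (gapR 0 x0 ^ 4 + 12 * gapR 0 x0 ^ 2 + 14) * T ^ 2.
Proof.
  intros HT. set (w := gapR 0 x0).
  assert (Hcmp : expect_at d T (fun y => gapR 0 y ^ 4) x0 - w ^ 4
          <= ((12 * w ^ 2 + 2) * T + 12 * T ^ 2) - ((12 * w ^ 2 + 2) * 0 + 12 * 0 ^ 2)).
  { apply (expect_at_sub_le_of_gen_le d x0 d_pos (fun y => gapR 0 y ^ 4)
             (fun t => (12 * w ^ 2 + 2) * t + 12 * t ^ 2) (fun t => 12 * w ^ 2 + 2 + 24 * t));
      auto with exp_bounded; [lra | |].
    - intros t _. auto_derive; auto. ring.
    - intros t Ht. eapply Rle_trans.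
      { apply (expect_at_le d x0 d_pos _ _ (fun y => 12 * gapR 0 y ^ 2 + 2));
          auto with exp_bounded; [lra|].
        intros y Hy. now apply gen_gapR_0_pow4_le. }
      rewrite expect_at_plus, expect_at_scal, expect_at_const by auto with exp_bounded.
      pose proof (expect_at_gapR_sq_le 0 t ltac:(lia) ltac:(lra)). fold w in H. lra. }
  assert (T <= T ^ 2) by nra.
  assert (0 <= w ^ 4) by (replace (w ^ 4) with ((w ^ 2) ^ 2) by ring; apply pow2_ge_0).
  assert (w ^ 4 <= w ^ 4 * T ^ 2) by nra.
  assert (w ^ 2 * T <= w ^ 2 * T ^ 2) by (apply Rmult_le_compat_l; [apply pow2_ge_0 | lra]).
  nra.
Qed.

Lemma expect_at_gapR_0_ge T : 1 <= T ->
  sqrt T / sqrt (gapR 0 x0 ^ 4 + 12 * gapR 0 x0 ^ 2 + 14) <= expect_at d T (gapR 0) x0.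
Proof.
  intros HT. set (w := gapR 0 x0). set (Q := w ^ 4 + 12 * w ^ 2 + 14).
  assert (HQ : 0 < Q) by (unfold Q; pose proof (pow2_ge_0 w); pose proof (pow2_ge_0 (w ^ 2)); nra).
  set (K := sqrt Q). set (s := sqrt T).
  assert (HK : 0 < K) by now apply sqrt_lt_R0.
  assert (HKK : K * K = Q) by (apply sqrt_sqrt; lra).
  assert (Hs : 1 <= s) by now apply sqrt_ge_1.
  assert (Hss : s * s = T) by (apply sqrt_sqrt; lra).
  set (a := K * s). assert (Ha : 0 < a) by (unfold a; nra).
  pose proof (expect_at_gapR_0_sq_ge T ltac:(lra)) as H2.
  pose proof (expect_at_gapR_0_pow4_le T HT) as H4. fold w Q in H4.
  eapply Rle_trans; [|apply (expect_at_moment_lower d x0 d_pos x0_increasing _ a);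
                       auto with exp_bounded; [lra|]].
  2:{ intros y Hy. now apply (gapR_nonneg d). }
  assert (Hc2 : 0 < / (2 * a ^ 3)) by (apply Rinv_0_lt_compat; pose proof (pow_lt a 3 Ha); lra).
  assert (3 / (2 * a) * T <= 3 / (2 * a) * expect_at d T (fun y => gapR 0 y ^ 2) x0)
    by (apply Rmult_le_compat_l; [apply Rlt_le, Rdiv_lt_0_compat|]; lra).
  assert (/ (2 * a ^ 3) * expect_at d T (fun y => gapR 0 y ^ 4) x0 <= / (2 * a ^ 3) * (Q * T ^ 2))
    by (apply Rmult_le_compat_l; lra).
  replace (s / K) with (3 / (2 * a) * T - / (2 * a ^ 3) * (Q * T ^ 2)); [lra|].
  unfold a. rewrite <- Hss, <- HKK. field. lra.
Qed.

Lemma expected_occupation_ge : exists c T0 : R, 0 < c /\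
  forall T, T0 <= T -> c * sqrt T <= expected_occupation d T x0.
Proof.
  set (w := gapR 0 x0). set (K := sqrt (w ^ 4 + 12 * w ^ 2 + 14)).
  assert (Hw : 0 <= w) by (apply (gapR_nonneg d); auto; lia).
  assert (HK : 0 < K)
    by (apply sqrt_lt_R0; pose proof (pow2_ge_0 w); pose proof (pow2_ge_0 (w ^ 2)); nra).
  exists (/ (2 * K)), (Rmax 1 ((2 * K * w) ^ 2)).
  split; [apply Rinv_0_lt_compat; lra|]. intros T HT.
  assert (HT1 : 1 <= T) by (eapply Rle_trans; [apply Rmax_l | exact HT]).
  assert (Hw2 : 2 * K * w <= sqrt T).
  { rewrite <- (sqrt_pow2 (2 * K * w)) by nra. apply sqrt_le_1_alt.
    eapply Rle_trans; [apply Rmax_r | exact HT]. }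
  unfold expected_occupation.
  eapply Rle_trans.
  2:{ apply (RInt_expect_at_le d x0 ltac:(lia) x0_increasing (gen d (gapR 0)));
        auto with exp_bounded; [lra|].
      intros y Hy. now apply gen_gapR_0_le_indB. }
  rewrite RInt_expect_at_gen by (auto with exp_bounded; lia).
  pose proof (expect_at_gapR_0_ge T HT1) as H. fold w K in H.
  assert (w <= / (2 * K) * sqrt T).
  { apply (Rmult_le_reg_l (2 * K)); [lra|]. field_simplify; lra. }
  assert (sqrt T / K = 2 * (/ (2 * K) * sqrt T)) by (field; lra).
  fold w. lra.
Qed.

End PushTASEP.

Theorem theorem2p4 (d : nat) (x0 : config) :
  (2 <= d)%nat ->
  (forall k : nat, (S k < d)%nat -> (x0 k < x0 (S k))%Z) ->
  (exists c1 c2 T0 : R, 0 < c1 /\ 0 < c2 /\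
     forall T : R, T0 <= T ->
       c1 * sqrt T <= expected_occupation d T x0 <= c2 * sqrt T)
  /\
  (forall i : nat, (i < d)%nat ->
     exists C T0 : R, forall T : R, T0 <= T ->
       Rabs (expected_displacement d T x0 i - T) <= C * sqrt T).
Proof.
  intros Hd Hx0. split.
  - destruct (expected_occupation_ge d x0 Hd Hx0) as [c [T0 [Hc Hlow]]].
    destruct (expected_occupation_le d x0 Hd Hx0) as [C [HC Hup]].
    exists c, C, (Rmax 1 T0). split; [exact Hc|]. split; [exact HC|].
    intros T HT. split.
    + apply Hlow. eapply Rle_trans; [apply Rmax_r | exact HT].
    + apply Hup. eapply Rle_trans; [apply Rmax_l | exact HT].
  - intros i Hi. now apply expected_displacement_O_sqrt.
Qed.
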